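(* Let $A=(S,\delta,s_0,F)$ be a $\mathbf{JSL}$-dfa over $\Sigma$. Then: (1) for every $s\in S$, the language accepted by the state $s$ in $A^{\mathsf{op}}$ is $\{w\in\Sigma^*: \delta_{w^r}(s_0)\not\le_S s\}$; (2) if $A$ accepts $L$, then $A^{\mathsf{op}}$ accepts $L^r=\{w^r: w\in L\}$; (3) $[\mathrm{reach}(A)]^{\mathsf{op}}\cong\mathrm{simple}(A^{\mathsf{op}})$ as $\mathbf{JSL}$-dfas; in particular $A$ is reachable if and only if $A^{\mathsf{op}}$ is simple.
   Context: Finite semilattices have joins of all finite subsets; their morphisms preserve finite joins. A $\mathbf{JSL}$-dfa $A=(S,\delta,s_0,F)$: a finite semilattice $S$, semilattice morphisms $\delta_a\colon S\to S$ ($a\in\Sigma$), initial state $s_0$, final states $F=\{s:s\not\le s_f\}$ for some $s_f\in S$. Write $\delta_w=\delta_{a_n}\circ\cdots\circ\delta_{a_1}$ for $w=a_1\cdots a_n$, and $w^r=a_n\cdots a_1$. The language accepted by a state $s$ is $L(A,s)=\{w:\delta_w(s)\in F\}$, and $A$ accepts $L(A,s_0)$. Morphisms of $\mathbf{JSL}$-dfas are semilattice morphisms preserving transitions, initial state and final states (both ways). The dual $A^{\mathsf{op}}$ has states $S^{\mathsf{op}}$ (reversed order), transitions $\delta^*_a(s)=$ the $\le_S$-largest $t$ with $\delta_a(t)\le_S s$, initial state the $\le_S$-largest non-final state of $A$, and final states $\{s: s_0\not\le_S s\}$. $A$ is reachable if every state is a finite join of states $\delta_w(s_0)$; $\mathrm{reach}(A)$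 is the sub-$\mathbf{JSL}$-dfa on the set of all such finite joins. $A$ is simple if distinct states accept distinct languages; $\mathrm{simple}(A)$ is the $\mathbf{JSL}$-dfa whose states are the languages $L(A,s)$, $s\in S$, ordered by inclusion (join $=$ union), with transitions $K\mapsto a^{-1}K=\{w:aw\in K\}$, initial state $L(A,s_0)$, and final states the $K$ with $\epsilon\in K$. *)

From mathcomp Require Import all_boot.
From Stdlib Require Import ClassicalEpsilon.


(* The state set is the subset [jin] of the
   ambient type [jst]; [jjoin] is the binary join, [jbot] the empty join,
   [jdelta a] the transition for letter [a], [jinit] the initial state and
   [jfinal] the set of final states. *)
Record jdfa (Sigma : Type) := JDfa {
  jst : Type;
  jin : jst -> Prop;
  jjoin : jst -> jst -> jst;
  jbot : jst;
  jdelta : Sigma -> jst -> jst;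
  jinit : jst;
  jfinal : jst -> Prop
}.

Arguments jst {Sigma} j.
Arguments jin {Sigma} j _.
Arguments jjoin {Sigma} j _ _.
Arguments jbot {Sigma} j.
Arguments jdelta {Sigma} j _ _.
Arguments jinit {Sigma} j.
Arguments jfinal {Sigma} j _.

Section JDFA.
Context {Sigma : finType}.
Implicit Types A B : jdfa Sigma.

Definition jle A (x y : jst A) : Prop := jjoin A x y = y.

Definition is_jdfa A : Prop :=
  [/\ (exists l : list (jst A), forall x, jin A x -> List.In x l),
      [/\ jin A (jbot A), (forall x y, jin A x -> jin A y -> jin A (jjoin A x y)),
          (forall a x, jin A x -> jin A (jdelta A a x)) & jin A (jinit A)],
      [/\ (forall x y z, jin A x -> jin A y -> jin A z ->
             jjoin A x (jjoin A y z) = jjoin A (jjoin A x y) z),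
          (forall x y, jin A x -> jin A y -> jjoin A x y = jjoin A y x),
          (forall x, jin A x -> jjoin A x x = x) &
          (forall x, jin A x -> jjoin A (jbot A) x = x)],
      (forall a, jdelta A a (jbot A) = jbot A /\
         forall x y, jin A x -> jin A y ->
           jdelta A a (jjoin A x y) = jjoin A (jdelta A a x) (jdelta A a y)) &
      (exists sf, jin A sf /\ forall s, jin A s -> (jfinal A s <-> ~ jle A s sf))].

Definition jdw A (w : seq Sigma) (s : jst A) : jst A :=
  foldl (fun t a => jdelta A a t) s w.

Definition jlang A (s : jst A) : seq Sigma -> Prop :=
  fun w => jfinal A (jdw A w s).
Definition jaccepts A : seq Sigma -> Prop := jlang A (jinit A).

Definition jgreatest A (P : jst A -> Prop) : jst A :=
  epsilon (inhabits (jbot A))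
    (fun t => [/\ jin A t, P t & forall u, jin A u -> P u -> jle A u t]).

(* The dual A^op: reversed order (so join = meet of A, bottom = top of A),
   delta*_a(s) = largest t with delta_a(t) <= s, initial state the largest
   non-final state, final states {s | s_0 not<= s}. *)
Definition jop A : jdfa Sigma :=
  @JDfa Sigma (jst A) (jin A)
    (fun x y => jgreatest A (fun t => jle A t x /\ jle A t y))
    (jgreatest A (fun _ => True))
    (fun a s => jgreatest A (fun t => jle A (jdelta A a t) s))
    (jgreatest A (fun t => ~ jfinal A t))
    (fun s => ~ jle A (jinit A) s).

Definition jbigjoin A (l : seq (jst A)) : jst A := foldr (jjoin A) (jbot A) l.

Definition jreachable_state A (s : jst A) : Prop :=
  exists ws : seq (seq Sigma), s = jbigjoin A (map (fun w => jdw A w (jinit A)) ws).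

Definition jreachable A : Prop := forall s, jin A s -> jreachable_state A s.

Definition jreach A : jdfa Sigma :=
  @JDfa Sigma (jst A) (fun s => jin A s /\ jreachable_state A s)
    (jjoin A) (jbot A) (jdelta A) (jinit A) (jfinal A).

Definition jsimple A : Prop :=
  forall s t, jin A s -> jin A t -> (forall w, jlang A s w <-> jlang A t w) -> s = t.

(* simple(A): states are the languages L(A,s), ordered by inclusion
   (join = union), transitions K |-> a^{-1}K, final iff epsilon in K *)
Definition jsimplify A : jdfa Sigma :=
  @JDfa Sigma (seq Sigma -> Prop)
    (fun K => exists s, jin A s /\ K = jlang A s)
    (fun K1 K2 w => K1 w \/ K2 w)
    (fun _ => False)
    (fun a K w => K (a :: w))
    (jlang A (jinit A))
    (fun K => K [::]).

Definition jmorph A B (f : jst A -> jst B) : Prop :=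
  [/\ (forall x, jin A x -> jin B (f x)),
      (forall x y, jin A x -> jin A y -> f (jjoin A x y) = jjoin B (f x) (f y)),
      f (jbot A) = jbot B,
      (forall a x, jin A x -> f (jdelta A a x) = jdelta B a (f x)) &
      f (jinit A) = jinit B /\ (forall x, jin A x -> (jfinal B (f x) <-> jfinal A x))].

Definition jiso A B : Prop :=
  exists (f : jst A -> jst B) (g : jst B -> jst A),
    [/\ jmorph A B f, jmorph B A g, (forall x, jin A x -> g (f x) = x) &
        (forall y, jin B y -> f (g y) = y)].

End JDFA.

From mathcomp Require Import all_boot.
From Stdlib Require Import Classical ClassicalEpsilon FunctionalExtensionality PropExtensionality.

Set Implicit Arguments.
Unset Strict Implicit.
Unset Printing Implicit Defensive.

(* Every operation of A^op is defined as the largest element of some subset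
   of S.  Since S is finite, every subset containing bottom and closed under
   joins has a largest element, and when the subset is moreover a down-set,
   that element classifies it ([jgreatest_ideal]).  This gives order-theoretic
   descriptions of the meet, top, transitions and initial state of A^op, from
   which (1) follows by induction on words:  t <= delta*_w(s) iff
   delta_{w^r}(t) <= s.  Part (2) is (1) at the initial state of A^op.

   For (3) we first show that reach(A) is itself a JSL-dfa, so that (1)
   applies to it.  A reachable state is the join of the states delta_v(s_0)
   below it, so by (1) two reachable states with the same A^op-language are
   equal; conversely every state has the same A^op-language as the largest
   reachable state below it.  This yields "A reachable <-> A^op simple", and
   shows that s |-> L(reach(A)^op, s) is a bijective morphism
   reach(A)^op -> simple(A^op), whose inverse is then a morphism as well. *)

Section General.
Variable Sigma : finType.
Implicit Types (B C E : jdfa Sigma) (K : seq Sigma -> Prop).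

Lemma lang_ext K K' : (forall w, K w <-> K' w) -> K = K'.
Proof.
by move=> KK'; apply: functional_extensionality => w; apply: propositional_extensionality.
Qed.

Lemma jdw_rcons B w a s : jdw B (rcons w a) s = jdelta B a (jdw B w s).
Proof. by rewrite /jdw foldl_rcons. Qed.

Definition jclosed B : Prop :=
  [/\ jin B (jbot B), (forall x y, jin B x -> jin B y -> jin B (jjoin B x y)),
      (forall a x, jin B x -> jin B (jdelta B a x)) & jin B (jinit B)].

Lemma morph_inv B C (f : jst B -> jst C) (g : jst C -> jst B) :
  jclosed B -> jmorph B C f -> (forall y, jin C y -> jin B (g y)) ->
  (forall x, jin B x -> g (f x) = x) -> (forall y, jin C y -> f (g y) = y) ->
  jmorph C B g.
Proof.
case=> in0 inJ inD ini [fin fJ f0 fD [fi ffin]] gin gf fg; split => //.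
- move=> x y Hx Hy.
  have -> : jjoin C x y = f (jjoin B (g x) (g y)) by rewrite fJ ?fg //; apply: gin.
  by rewrite gf //; apply: inJ; apply: gin.
- by rewrite -f0 gf.
- move=> a x Hx.
  have -> : jdelta C a x = f (jdelta B a (g x)) by rewrite fD ?fg //; apply: gin.
  by rewrite gf //; apply: inD; apply: gin.
- split => [|y Hy]; first by rewrite -fi gf.
  by rewrite -(ffin _ (gin _ Hy)) fg.
Qed.

(* The language map into simple(E) always commutes with transitions and
   reflects finality; it is a morphism once it preserves joins, bottom and
   the initial state. *)
Lemma lang_morph C E :
  (forall x, jin C x -> jin (jsimplify E) (jlang C x)) ->
  (forall x y, jin C x -> jin C y ->
     jlang C (jjoin C x y) = (fun w => jlang C x w \/ jlang C y w)) ->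
  jlang C (jbot C) = (fun _ => False) ->
  jlang C (jinit C) = jlang E (jinit E) ->
  jmorph C (jsimplify E) (jlang C).
Proof. by move=> Hin HJ H0 Hinit; split => //; split => // x _. Qed.

Lemma reach_reachable B : jreachable (jreach B).
Proof. by move=> s []. Qed.

End General.

Section JSLdfa.
Variable Sigma : finType.
Variable B : jdfa Sigma.
Hypothesis HB : is_jdfa B.

Local Notation IN := (jin B).
Local Notation J := (jjoin B).
Local Notation le := (jle B).
Local Notation D := (jdelta B).
Local Notation s0 := (jinit B).
Local Notation bot := (jbot B).
Local Notation dw := (jdw B).
Local Notation R := (jreachable_state B).
Local Notation rj ws := (jbigjoin B (map (fun w => jdw B w (jinit B)) ws)).

Lemma in_bot : IN bot.
Proof. by case: HB => _ []. Qed.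
Lemma in_join x y : IN x -> IN y -> IN (J x y).
Proof. by case: HB => _ [_ inJ _ _] _ _ _; apply: inJ. Qed.
Lemma in_delta a x : IN x -> IN (D a x).
Proof. by case: HB => _ [_ _ inD _] _ _ _; apply: inD. Qed.
Lemma in_init : IN s0.
Proof. by case: HB => _ []. Qed.
Lemma jjoinA x y z : IN x -> IN y -> IN z -> J x (J y z) = J (J x y) z.
Proof. by case: HB => _ _ [jA _ _ _] _ _; apply: jA. Qed.
Lemma jjoinC x y : IN x -> IN y -> J x y = J y x.
Proof. by case: HB => _ _ [_ jC _ _] _ _; apply: jC. Qed.
Lemma jjoinxx x : IN x -> J x x = x.
Proof. by case: HB => _ _ [_ _ jI _] _ _; apply: jI. Qed.
Lemma jjoin0x x : IN x -> J bot x = x.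
Proof. by case: HB => _ _ [_ _ _ j0] _ _; apply: j0. Qed.
Lemma jjoinx0 x : IN x -> J x bot = x.
Proof. by move=> Hx; rewrite jjoinC ?jjoin0x //; apply: in_bot. Qed.
Lemma jdelta0 a : D a bot = bot.
Proof. by case: HB => _ _ _ /(_ a) []. Qed.
Lemma jdeltaJ a x y : IN x -> IN y -> D a (J x y) = J (D a x) (D a y).
Proof. by case: HB => _ _ _ /(_ a) [_ DJ] _; apply: DJ. Qed.
Lemma final_sf : exists2 sf, IN sf & forall s, IN s -> (jfinal B s <-> ~ le s sf).
Proof. by case: HB => _ _ _ _ [sf [Hsf Hfin]]; exists sf. Qed.

Lemma in_dw w s : IN s -> IN (dw w s).
Proof. by elim: w s => [|a w IH] s Hs //=; apply: IH; apply: in_delta. Qed.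

Lemma in_word w : IN (dw w s0).
Proof. exact: in_dw in_init. Qed.

Lemma le_trans x y z : le x y -> le y z -> IN x -> IN y -> IN z -> le x z.
Proof. by rewrite /jle => xy yz Hx Hy Hz; rewrite -yz jjoinA // xy. Qed.
Lemma le_anti x y : IN x -> IN y -> le x y -> le y x -> x = y.
Proof. by rewrite /jle => Hx Hy xy yx; rewrite -xy jjoinC. Qed.
Lemma le_joinl x y : IN x -> IN y -> le x (J x y).
Proof. by rewrite /jle => Hx Hy; rewrite jjoinA ?jjoinxx. Qed.
Lemma le_joinr x y : IN x -> IN y -> le y (J x y).
Proof. by move=> Hx Hy; rewrite jjoinC //; apply: le_joinl. Qed.
Lemma join_lub x y z : IN x -> IN y -> IN z -> le x z -> le y z -> le (J x y) z.
Proof. by rewrite /jle => Hx Hy Hz xz yz; rewrite -jjoinA ?yz. Qed.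
Lemma le_bot x : IN x -> le bot x.
Proof. exact: jjoin0x. Qed.
Lemma le_delta a x y : IN x -> IN y -> le x y -> le (D a x) (D a y).
Proof. by rewrite /jle => Hx Hy xy; rewrite -jdeltaJ ?xy. Qed.

Lemma greatest_exists (P : jst B -> Prop) :
  P bot -> (forall x y, IN x -> IN y -> P x -> P y -> P (J x y)) ->
  exists2 t, IN t /\ P t & forall u, IN u -> P u -> le u t.
Proof.
case: HB => [[l Hl] _ _ _ _] Pbot PJ.
suff [t HPt Hmax] : exists2 t, IN t /\ P t &
    forall u, List.In u l -> IN u -> P u -> le u t.
  by exists t => // u Hu; apply: Hmax (Hl u Hu) Hu.
elim: l {Hl} => [|x l [t [Ht Pt] Hmax]].
  by exists bot => [|u []]; split => //; apply: in_bot.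
have [[Hx Px]|nPx] := classic (IN x /\ P x); last first.
  by exists t => // u [<- Hu Pu|]; [case: nPx | apply: Hmax].
exists (J x t); first by split; [apply: in_join | apply: PJ].
move=> u [<- _ _|Hu Hu' Pu]; first exact: le_joinl.
by apply: le_trans (Hmax _ Hu Hu' Pu) (le_joinr Hx Ht) _ _ _ => //; apply: in_join.
Qed.

Lemma jgreatestP (P : jst B -> Prop) :
  P bot -> (forall x y, IN x -> IN y -> P x -> P y -> P (J x y)) ->
  [/\ IN (jgreatest B P), P (jgreatest B P) &
      forall u, IN u -> P u -> le u (jgreatest B P)].
Proof.
move=> Pbot PJ; have [t [Ht Pt] Hmax] := greatest_exists Pbot PJ.
by apply: (epsilon_spec (inhabits bot)
  (fun t => [/\ IN t, P t & forall u, IN u -> P u -> le u t])); exists t.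
Qed.

Lemma jgreatest_ideal (P : jst B -> Prop) :
  P bot -> (forall x y, IN x -> IN y -> P x -> P y -> P (J x y)) ->
  (forall u v, IN u -> IN v -> le u v -> P v -> P u) ->
  IN (jgreatest B P) /\ forall t, IN t -> (le t (jgreatest B P) <-> P t).
Proof.
move=> Pbot PJ Pdown; have [Hg Pg Hmax] := jgreatestP Pbot PJ.
by split=> // t Ht; split=> [tg|]; [apply: Pdown tg Pg | apply: Hmax].
Qed.

Lemma op_meetP x y : IN x -> IN y ->
  IN (jjoin (jop B) x y) /\
  forall t, IN t -> (le t (jjoin (jop B) x y) <-> le t x /\ le t y).
Proof.
move=> Hx Hy; apply: jgreatest_ideal.
- by split; apply: le_bot.
- by move=> u v Hu Hv [ux uy] [vx vy]; split; apply: join_lub.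
- by move=> u v Hu Hv uv [vx vy]; split; apply: le_trans uv _ _ _ _.
Qed.

Lemma op_topP : IN (jbot (jop B)) /\ forall t, IN t -> le t (jbot (jop B)).
Proof.
have [|||Htop Hle] := @jgreatest_ideal (fun _ => True) => //.
by split=> // t Ht; apply/Hle.
Qed.

Lemma op_deltaP a s : IN s ->
  IN (jdelta (jop B) a s) /\
  forall t, IN t -> (le t (jdelta (jop B) a s) <-> le (D a t) s).
Proof.
move=> Hs; apply: jgreatest_ideal.
- by rewrite jdelta0; apply: le_bot.
- move=> x y Hx Hy xs ys; rewrite jdeltaJ //.
  by apply: join_lub => //; apply: in_delta.
- move=> u v Hu Hv uv vs; apply: le_trans (le_delta a Hu Hv uv) vs _ _ _ => //;
    exact: in_delta.
Qed.

Lemma op_initP : IN (jinit (jop B)) /\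
  forall t, IN t -> (le t (jinit (jop B)) <-> ~ jfinal B t).
Proof.
have [sf Hsf Hfin] := final_sf.
have nonfinal t : IN t -> (~ jfinal B t <-> le t sf).
  by move=> Ht; rewrite Hfin //; split => [/NNPP|]; tauto.
apply: jgreatest_ideal.
- by rewrite nonfinal; [apply: le_bot | apply: in_bot].
- move=> x y Hx Hy; rewrite !nonfinal //; last exact: in_join.
  exact: join_lub.
- by move=> u v Hu Hv uv; rewrite !nonfinal // => /(le_trans uv); apply.
Qed.

Lemma op_closed : jclosed (jop B).
Proof.
split; [exact: op_topP.1 | | | exact: op_initP.1].
- by move=> x y Hx Hy; case: (op_meetP Hx Hy).
- by move=> a x Hx; case: (op_deltaP a Hx).
Qed.

(* Transitions of B^op along w are right adjoint to transitions of B
   along the reversed word. *)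
Lemma op_dwP w s : IN s ->
  IN (jdw (jop B) w s) /\
  forall t, IN t -> (le t (jdw (jop B) w s) <-> le (dw (rev w) t) s).
Proof.
elim: w s => [|a w IH] s Hs /=; first by split.
have [Hd Hds] := op_deltaP a Hs; have [Hw Hws] := IH _ Hd.
split=> // t Ht; rewrite Hws // rev_cons jdw_rcons; apply: Hds.
exact: in_dw.
Qed.

Lemma op_lang s w : IN s -> (jlang (jop B) s w <-> ~ le (dw (rev w) s0) s).
Proof.
by move=> Hs; rewrite /jlang /= (op_dwP w Hs).2 //; apply: in_init.
Qed.

Lemma op_accepts w : jaccepts (jop B) w <-> jaccepts B (rev w).
Proof.
rewrite /jaccepts op_lang; last exact: op_initP.1.
rewrite op_initP.2 /jlang; last exact: in_word.
by split => [/NNPP|]; tauto.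
Qed.

Lemma op_lang_meet x y : IN x -> IN y ->
  jlang (jop B) (jjoin (jop B) x y) =
  (fun w => jlang (jop B) x w \/ jlang (jop B) y w).
Proof.
move=> Hx Hy; have [Hm Hmeet] := op_meetP Hx Hy; apply: lang_ext => w.
rewrite !op_lang // Hmeet; last exact: in_word.
by split; [apply: not_and_or | tauto].
Qed.

Lemma op_lang_top : jlang (jop B) (jbot (jop B)) = (fun _ => False).
Proof.
have [Htop Hle] := op_topP; apply: lang_ext => w.
by rewrite op_lang //; split => // /(_ (Hle _ (in_word _))).
Qed.

Lemma in_rj ws : IN (rj ws).
Proof.
by elim: ws => [|w ws IH] /=; [apply: in_bot | apply: in_join; [apply: in_word|]].
Qed.

Lemma rj_cat ws1 ws2 : rj (ws1 ++ ws2) = J (rj ws1) (rj ws2).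
Proof.
elim: ws1 => [|w ws1 IH] /=; first by rewrite jjoin0x //; apply: in_rj.
by rewrite IH jjoinA //; [apply: in_word | apply: in_rj | apply: in_rj].
Qed.

Lemma rj_upper ws w : w \in ws -> le (dw w s0) (rj ws).
Proof.
elim: ws => // w' ws IH; rewrite in_cons => /orP [/eqP -> | /IH Hw] /=.
  by apply: le_joinl; [apply: in_word | apply: in_rj].
apply: le_trans Hw (le_joinr (in_word w') (in_rj ws)) _ _ _;
  [apply: in_word | apply: in_rj | apply: in_join; [apply: in_word | apply: in_rj]].
Qed.

Lemma rj_least ws y : IN y -> (forall w, w \in ws -> le (dw w s0) y) -> le (rj ws) y.
Proof.
move=> Hy; elim: ws => [|w ws IH] Hle /=; first exact: le_bot.
apply: join_lub => //; [apply: in_word | apply: in_rj | apply: Hle; exact: mem_head |].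
by apply: IH => v Hv; apply: Hle; rewrite in_cons Hv orbT.
Qed.

Lemma rj_delta a ws : D a (rj ws) = rj (map (rcons^~ a) ws).
Proof.
elim: ws => [|w ws IH] /=; first exact: jdelta0.
by rewrite jdeltaJ; [rewrite IH jdw_rcons | apply: in_word | apply: in_rj].
Qed.

Lemma R_bot : R bot.
Proof. by exists [::]. Qed.
Lemma R_join x y : R x -> R y -> R (J x y).
Proof. by case=> ws1 -> [ws2 ->]; exists (ws1 ++ ws2); rewrite rj_cat. Qed.
Lemma R_word v : R (dw v s0).
Proof. by exists [:: v]; rewrite /= jjoinx0 //; apply: in_word. Qed.
Lemma R_delta a x : R x -> R (D a x).
Proof. by case=> ws ->; exists (map (rcons^~ a) ws); apply: rj_delta. Qed.

Lemma reach_le x y : R x -> IN y ->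
  (forall v, le (dw v s0) x -> le (dw v s0) y) -> le x y.
Proof. by case=> ws -> Hy Hle; apply: rj_least => // w Hw; apply/Hle/rj_upper. Qed.

Lemma below_reach s : IN s ->
  exists2 r, IN r /\ R r & forall u, IN u -> R u -> (le u r <-> le u s).
Proof.
move=> Hs; have [||r [Hr [Rr rs]] Hmax] := @greatest_exists (fun t => R t /\ le t s).
- by split; [apply: R_bot | apply: le_bot].
- by move=> x y Hx Hy [Rx xs] [Ry ys]; split; [apply: R_join | apply: join_lub].
exists r => // u Hu Ru; split => [ur|us]; last exact: Hmax.
exact: le_trans ur rs Hu Hr Hs.
Qed.

(* reach(B) is again a JSL-dfa; its final-state bound is the largest
   reachable state below s_f. *)
Lemma reach_is_jdfa : is_jdfa (jreach B).
Proof.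
have [l Hl] : exists l : list (jst B), forall x, IN x -> List.In x l by case: HB.
have [sf Hsf Hfin] := final_sf.
have [r [Hr Rr] Hrsf] := below_reach Hsf.
split.
- by exists l => x [/Hl].
- split; [by split; [apply: in_bot | apply: R_bot] | | |].
  + by move=> x y [Hx Rx] [Hy Ry]; split; [apply: in_join | apply: R_join].
  + by move=> a x [Hx Rx]; split; [apply: in_delta | apply: R_delta].
  + by split; [apply: in_init | apply: (R_word [::])].
- split=> [x y z [Hx _] [Hy _] [Hz _] | x y [Hx _] [Hy _] | x [Hx _] | x [Hx _]];
    [exact: jjoinA | exact: jjoinC | exact: jjoinxx | exact: jjoin0x].
- by move=> a; split => [|x y [Hx _] [Hy _]]; [apply: jdelta0 | apply: jdeltaJ].
- exists r; split => // s [Hs Rs]; rewrite Hfin //.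
  by split=> nle le_sr; apply: nle; apply/(Hrsf _ Hs Rs).
Qed.

Lemma op_lang_sameP s t : IN s -> IN t ->
  (forall w, jlang (jop B) s w <-> jlang (jop B) t w) <->
  (forall v, le (dw v s0) s <-> le (dw v s0) t).
Proof.
move=> Hs Ht; split=> E v; last by rewrite !op_lang // E.
have := E (rev v); rewrite !op_lang // revK => E'.
by split=> H; apply: NNPP; tauto.
Qed.

Lemma reachable_op_simple : jreachable B -> jsimple (jop B).
Proof.
move=> Hreach s t Hs Ht /(op_lang_sameP Hs Ht) E.
by apply: le_anti => //; apply: reach_le (Hreach _ _) _ _ => // v; rewrite E.
Qed.

Lemma op_simple_reachable : jsimple (jop B) -> jreachable B.
Proof.
move=> Hsimp s Hs; have [r [Hr Rr] Hrs] := below_reach Hs.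
suff -> : s = r by [].
apply: Hsimp => //; apply/(op_lang_sameP Hs Hr) => v.
by rewrite Hrs //; [apply: in_word | apply: R_word].
Qed.

End JSLdfa.

Section ReachDual.
Variable Sigma : finType.
Variable A : jdfa Sigma.
Hypothesis HA : is_jdfa A.

Local Notation Rop := (jop (jreach A)).

Lemma op_lang_reach s : jin (jreach A) s -> jlang Rop s = jlang (jop A) s.
Proof.
case=> Hs Rs; apply: lang_ext => w.
by rewrite (op_lang (reach_is_jdfa HA)) // (op_lang HA).
Qed.

Definition reach_rep (K : seq Sigma -> Prop) : jst A :=
  epsilon (inhabits (jbot A)) (fun r => jin (jreach A) r /\ jlang Rop r = K).

Lemma reach_repP K : jin (jsimplify (jop A)) K ->
  jin (jreach A) (reach_rep K) /\ jlang Rop (reach_rep K) = K.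
Proof.
case=> s [Hs ->]; apply: (epsilon_spec (inhabits (jbot A))
  (fun r => jin (jreach A) r /\ jlang Rop r = jlang (jop A) s)).
have [r [Hr Rr] Hrs] := below_reach HA Hs.
exists r; split=> //; rewrite op_lang_reach //; apply: lang_ext.
apply/(op_lang_sameP HA Hr Hs) => v.
by rewrite Hrs //; [apply: in_word | apply: R_word].
Qed.

(* Part (3), first half: s |-> L(reach(A)^op, s) is an isomorphism
   reach(A)^op ~= simple(A^op); it is injective because reach(A)^op is
   simple, and reach_rep is its inverse. *)
Lemma reach_op_iso : jiso Rop (jsimplify (jop A)).
Proof.
have HR := reach_is_jdfa HA.
have f_morph : jmorph Rop (jsimplify (jop A)) (jlang Rop).
  apply: lang_morph.
  - by move=> x Hx; exists x; split; [case: Hx | apply: op_lang_reach].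
  - exact: op_lang_meet HR.
  - exact: op_lang_top HR.
  - apply: lang_ext => w; apply: iff_trans (op_accepts HR w) _.
    exact: iff_sym (op_accepts HA w).
have [f_in _ _ _ _] := f_morph.
have gf x : jin Rop x -> reach_rep (jlang Rop x) = x.
  move=> Hx; have [Hr E] := reach_repP (f_in x Hx).
  have Hsimp := reachable_op_simple HR (@reach_reachable _ A).
  by apply: Hsimp Hr Hx _ => w; rewrite E.
exists (jlang Rop), reach_rep; split => // [|K HK]; last exact: (reach_repP HK).2.
apply: morph_inv f_morph _ gf _; first exact: op_closed HR.
- by move=> K HK; case: (reach_repP HK).
- by move=> K HK; case: (reach_repP HK).
Qed.

End ReachDual.

Theorem lemma3p8 (Sigma : finType) (A : jdfa Sigma) :
  is_jdfa A ->
  [/\ (forall s, jin A s -> forall w : seq Sigma,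
          jlang (jop A) s w <-> ~ jle A (jdw A (rev w) (jinit A)) s),
      (forall L : seq Sigma -> Prop, (forall w, jaccepts A w <-> L w) ->
          forall w, jaccepts (jop A) w <-> exists2 v, L v & w = rev v) &
      (jiso (jop (jreach A)) (jsimplify (jop A)) /\
       (jreachable A <-> jsimple (jop A)))].
Proof.
move=> HA; split.
- by move=> s Hs w; apply: op_lang.
- move=> L HL w; rewrite (op_accepts HA) HL.
  by split=> [Lw | [v Lv ->]]; [exists (rev w); rewrite ?revK | rewrite revK].
- split; first exact: reach_op_iso.
  by split; [apply: reachable_op_simple | apply: op_simple_reachable].
Qed.
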